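(* Let $F(\mathcal A)$ be a free group on a finite set $\mathcal A$, let $\psi$ be an automorphism of $F(\mathcal A)$, and let $\Gamma=F(\mathcal A)\rtimes_{(\psi)}F(s,t)$, where $F(s,t)$ is free on $s,t$ and both $s$ and $t$ act by $\psi$ (i.e. $sas^{-1}=tat^{-1}=\psi(a)$). Let $P\colon\mathbb N\to\mathbb N$ be an increasing function such that $d_{\mathcal A}(1,\psi^n(a))\le P(|n|)$ for all $a\in\mathcal A$ and $n\in\mathbb Z$. Then the length function $L$ of the combing $\sigma^{F(s,t)}\cdot\sigma^{F(\mathcal A)}$ of $\Gamma$ satisfies $L(n)\le nP(n)+n$ for all $n$.
   Context: Every $\gamma\in\Gamma$ is uniquely $\gamma=u\cdot g$ with $u\in F(s,t)$, $g\in F(\mathcal A)$. The combing $\sigma^{F(s,t)}\cdot\sigma^{F(\mathcal A)}$ assigns to $\gamma$ the word $\sigma_\gamma$ obtained by concatenating the freely reduced word in $\{s,t\}^{\pm}$ representing $u$ with the freely reduced word in $\mathcal A^{\pm}$ representing $g$. Its length is $L(n)=\max\{|\sigma_\gamma|: d_{\mathcal A\cup\{s,t\}}(1,\gamma)\le n\}$, where $|\sigma_\gamma|$ is the word length of $\sigma_\gamma$ and $d_{\mathcal A\cup\{s,t\}}$, $d_{\mathcal A}$ are word metrics. *)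

(* Free groups are modelled by freely reduced words. *)
From mathcomp Require Import all_boot all_order all_algebra.
Set Implicit Arguments. Unset Strict Implicit. Unset Printing Implicit Defensive.
Import GRing.Theory Num.Theory.

(* A letter of the alphabet T^{+-}: (x, false) is x, (x, true) is x^{-1}. *)
Definition inv_letter (T : eqType) (x : T * bool) : T * bool := (x.1, ~~ x.2).

Definition reduce (T : eqType) (w : seq (T * bool)) : seq (T * bool) :=
  foldr (fun x r => match r with
                    | y :: r' => if y == inv_letter x then r' else x :: r
                    | [::] => [:: x] end) [::] w.

Definition fmul (T : eqType) (u v : seq (T * bool)) := reduce (u ++ v).
Definition finv (T : eqType) (u : seq (T * bool)) := rev (map (@inv_letter T) u).

Definition ext_hom (A : eqType) (f : A -> seq (A * bool)) (w : seq (A * bool)) :=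
  reduce (flatten (map (fun x => if x.2 then finv (f x.1) else f x.1) w)).

Definition is_aut_pair (A : eqType) (f g : A -> seq (A * bool)) : Prop :=
  (forall a, ext_hom g (ext_hom f [:: (a, false)]) = [:: (a, false)]) /\
  (forall a, ext_hom f (ext_hom g [:: (a, false)]) = [:: (a, false)]).

Definition psi_pow (A : eqType) (f g : A -> seq (A * bool)) (n : int)
    (w : seq (A * bool)) : seq (A * bool) :=
  match n with
  | Posz m => iter m (ext_hom f) (reduce w)
  | Negz m => iter m.+1 (ext_hom g) (reduce w)
  end.

(* F(s,t): letters are bools (false = s, true = t). Exponent sum. *)
Definition exp_sum (u : seq (bool * bool)) : int :=
  (\sum_(x <- u) (if x.2 then -1 else 1))%R.

(* Gamma = F(A) x| F(s,t); the element (u, g) stands for u * g with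
   u in F(s,t), g in F(A).  Since s a s^-1 = t a t^-1 = psi(a),
   g * u = u * psi^(-exp_sum u)(g), hence
   (u1 g1)(u2 g2) = (u1 u2) (psi^(-exp_sum u2)(g1) g2). *)
Definition Gamma (A : eqType) := (seq (bool * bool) * seq (A * bool))%type.

Definition gmul (A : eqType) (f g : A -> seq (A * bool)) (x y : Gamma A) : Gamma A :=
  (fmul x.1 y.1, fmul (psi_pow f g (- exp_sum y.1)%R x.2) y.2).

Definition gone (A : eqType) : Gamma A := ([::], [::]).

Definition gen_elt (A : eqType) (l : (A + bool) * bool) : Gamma A :=
  match l.1 with
  | inl a => ([::], [:: (a, l.2)])
  | inr c => ([:: (c, l.2)], [::])
  end.

Definition eval_word (A : eqType) (f g : A -> seq (A * bool))
    (w : seq ((A + bool) * bool)) : Gamma A :=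
  foldl (fun acc l => gmul f g acc (gen_elt l)) (gone A) w.

Definition distG_le (A : eqType) (f g : A -> seq (A * bool)) (gam : Gamma A) (n : nat) :=
  exists w : seq ((A + bool) * bool), size w <= n /\ eval_word f g w = gam.

Definition distA_le (A : eqType) (x : seq (A * bool)) (n : nat) :=
  exists w : seq (A * bool), size w <= n /\ reduce w = x.

Definition comb_len (A : eqType) (gam : Gamma A) : nat :=
  size (reduce gam.1) + size (reduce gam.2).

(* Reading a word of length n from left to right, every letter s^{+-1} or t^{+-1}
   is pushed to the left past the F(A)-part g, twisting it by psi^{-+1}.  Hence, if
   the word has c letters in {s,t}^{+-1} and k = n - c letters in A^{+-1}, it
   represents u g with |u| <= c and g a product of k factors psi^j(a^{+-1}) with
   |j| <= c, each of length at most P c <= P n. *)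

From Pilot Require Import Defs.
From mathcomp Require Import all_boot all_order all_algebra.
From mathcomp Require Import zify.
Set Implicit Arguments. Unset Strict Implicit. Unset Printing Implicit Defensive.
Import GRing.Theory.

(* [fingraph] also exports a [finv]. *)
Local Notation finv := Defs.finv.

Section FreeReduction.
Variable T : eqType.
Implicit Types (x y : T * bool) (u v w z : seq (T * bool)).

Definition reduce_step x z : seq (T * bool) :=
  match z with
  | y :: z' => if y == inv_letter x then z' else x :: z
  | [::] => [:: x]
  end.

Lemma reduce_cons x w : reduce (x :: w) = reduce_step x (reduce w).
Proof. by []. Qed.

Lemma reduce_cat u v : reduce (u ++ v) = foldr reduce_step (reduce v) u.
Proof. by rewrite /reduce foldr_cat. Qed.

Lemma inv_letterK : involutive (@inv_letter T).
Proof. by case=> a b; rewrite /inv_letter /= negbK. Qed.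

Fixpoint reduced w :=
  if w is x :: ((y :: _) as w') then (y != inv_letter x) && reduced w' else true.

Lemma reduced_behead x w : reduced (x :: w) -> reduced w.
Proof. by case: w => //= y w /andP[]. Qed.

Lemma reduced_step x z : reduced z -> reduced (reduce_step x z).
Proof.
case: z => [|y z] //= z_red; case: ifP => [_|yNx]; last by rewrite /= yNx z_red.
exact: reduced_behead z_red.
Qed.

Lemma reduce_reduced w : reduced (reduce w).
Proof. by elim: w => //= x w; apply: reduced_step. Qed.

Lemma reduce_id w : reduced w -> reduce w = w.
Proof.
elim: w => // x w IHw w_red.
rewrite reduce_cons IHw; last exact: reduced_behead w_red.
by case: w w_red {IHw} => //= y w /andP[/negbTE->].
Qed.

Lemma reduceK w : reduce (reduce w) = reduce w.
Proof. exact/reduce_id/reduce_reduced. Qed.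

Lemma reduce_stepK x z : reduced z ->
  reduce_step x (reduce_step (inv_letter x) z) = z.
Proof.
case: z => [|y z] /=; first by rewrite eqxx.
rewrite inv_letterK; case: ifP => [/eqP-> | _]; last by rewrite /= eqxx.
by case: z => [|y' z] //= /andP[/negbTE->].
Qed.

Lemma reduce_step_foldr x z v : reduced z ->
  reduce_step x (foldr reduce_step z v) = foldr reduce_step z (reduce_step x v).
Proof.
move=> z_red; case: v => [|y v] //=; case: ifP => //= /eqP->.
by rewrite reduce_stepK //; elim: v => //= y' v; apply: reduced_step.
Qed.

Lemma foldr_reduce_step_reduce z u : reduced z ->
  foldr reduce_step z (reduce u) = foldr reduce_step z u.
Proof.
by move=> z_red; elim: u => //= x u <-; rewrite reduce_step_foldr.
Qed.

Lemma reduce_catmr u v : reduce (u ++ reduce v) = reduce (u ++ v).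
Proof. by rewrite !reduce_cat reduceK. Qed.

Lemma reduce_catml u v : reduce (reduce u ++ v) = reduce (u ++ v).
Proof. by rewrite !reduce_cat foldr_reduce_step_reduce ?reduce_reduced. Qed.

Lemma reduce_catm u v : reduce (reduce u ++ reduce v) = reduce (u ++ v).
Proof. by rewrite reduce_catml reduce_catmr. Qed.

Lemma size_reduce w : size (reduce w) <= size w.
Proof.
elim: w => // x w; rewrite reduce_cons /=.
case: (reduce w) => [|y z] //=; case: ifP => /= _; lia.
Qed.

Lemma finvK : involutive (@finv T).
Proof.
move=> w; rewrite /finv map_rev revK -map_comp.
by rewrite (eq_map (g := id)) ?map_id // => x /=; rewrite inv_letterK.
Qed.

Lemma size_finv w : size (finv w) = size w.
Proof. by rewrite /finv size_rev size_map. Qed.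

Lemma reduce_finv_cat w : reduce (finv w ++ w) = [::].
Proof.
elim: w => // x w IHw.
rewrite /finv /= rev_cons -cats1 -catA -reduce_catmr cat1s !reduce_cons.
by rewrite -{2}(inv_letterK x) reduce_stepK ?reduce_reduced // reduce_catmr.
Qed.

Lemma reduce_cat_finv w : reduce (w ++ finv w) = [::].
Proof. by rewrite -{1}(finvK w) reduce_finv_cat. Qed.

Lemma reduce_finv_unique u v : reduced u -> reduce (u ++ v) = [::] ->
  u = reduce (finv v).
Proof.
move=> u_red uv1; rewrite -(reduce_id u_red) -[u]cats0 -(reduce_cat_finv v).
by rewrite reduce_catmr catA -reduce_catml uv1.
Qed.

Lemma reduce_finv_reduce w : reduce (finv (reduce w)) = reduce (finv w).
Proof.
apply/esym/reduce_finv_unique; first exact: reduce_reduced.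
by rewrite reduce_catm reduce_finv_cat.
Qed.

End FreeReduction.

Section Endomorphism.
Variable A : eqType.
Implicit Types (h k : A -> seq (A * bool)) (x : A * bool) (u v w : seq (A * bool)).

Definition letter_img h x := if x.2 then finv (h x.1) else h x.1.

Lemma img_inv_letter h x : letter_img h (inv_letter x) = finv (letter_img h x).
Proof. by case: x => a [|]; rewrite /letter_img //= finvK. Qed.

Lemma ext_hom_cat h u v : ext_hom h (u ++ v) = reduce (ext_hom h u ++ ext_hom h v).
Proof. by rewrite /ext_hom map_cat flatten_cat reduce_catm. Qed.

Lemma ext_hom_cons h x w :
  ext_hom h (x :: w) = reduce (letter_img h x ++ ext_hom h w).
Proof. by rewrite /ext_hom /= reduce_catmr. Qed.

Lemma ext_hom_reduced h w : reduce (ext_hom h w) = ext_hom h w.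
Proof. exact: reduceK. Qed.

Lemma ext_hom_reduce_step h x z :
  ext_hom h (reduce_step x z) = reduce (letter_img h x ++ ext_hom h z).
Proof.
case: z => [|y z] /=; first by rewrite ext_hom_cons.
case: ifP => [/eqP-> | _]; last by rewrite ext_hom_cons.
rewrite ext_hom_cons reduce_catmr catA -reduce_catml img_inv_letter.
by rewrite reduce_cat_finv ext_hom_reduced.
Qed.

Lemma ext_hom_reduce h w : ext_hom h (reduce w) = ext_hom h w.
Proof.
by elim: w => // x w IHw; rewrite reduce_cons ext_hom_reduce_step IHw ext_hom_cons.
Qed.

Lemma ext_hom_finv h w : ext_hom h (finv w) = reduce (finv (ext_hom h w)).
Proof.
apply: reduce_finv_unique; first by rewrite -ext_hom_reduced reduce_reduced.
by rewrite -ext_hom_cat -ext_hom_reduce reduce_finv_cat.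
Qed.

Lemma ext_homK h k :
  (forall a, ext_hom k (ext_hom h [:: (a, false)]) = [:: (a, false)]) ->
  forall w, ext_hom k (ext_hom h w) = reduce w.
Proof.
move=> hkK; have hkK1 x : ext_hom k (ext_hom h [:: x]) = [:: x].
  case: x => a [|]; last exact: hkK.
  rewrite -[[:: (a, true)]]/(finv [:: (a, false)]).
  by rewrite ext_hom_finv ext_hom_reduce ext_hom_finv hkK.
elim=> // x w IHw.
by rewrite -cat1s ext_hom_cat ext_hom_reduce ext_hom_cat hkK1 IHw reduce_catmr.
Qed.

End Endomorphism.

Lemma int_succ_pred_ind (Q : int -> Prop) :
  Q 0%R -> (forall j, Q j -> Q (j + 1)%R) -> (forall j, Q j -> Q (j - 1)%R) ->
  forall j, Q j.
Proof.
move=> Q0 QS QP; elim/int_ind => [//|n /QS|n /QP]; congr Q; lia.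
Qed.

Lemma size_flatten_map_le (S : eqType) (U : Type) (F : S -> seq U) (s : seq S) m :
  {in s, forall x, size (F x) <= m} -> size (flatten (map F s)) <= size s * m.
Proof.
elim: s => //= x s IHs Fs_le; rewrite size_cat mulSn leq_add ?Fs_le ?mem_head //.
by apply: IHs => y s_y; apply: Fs_le; rewrite inE s_y orbT.
Qed.

Section Twisting.
Variable A : eqType.
Variables f g : A -> seq (A * bool).
Hypothesis fg_aut : is_aut_pair f g.
Implicit Types (x : A * bool) (u v w : seq (A * bool)) (L : seq (int * (A * bool))).

Local Notation psi := (psi_pow f g).

Lemma ext_hom_gf w : ext_hom g (ext_hom f w) = reduce w.
Proof. by apply: ext_homK; case: fg_aut. Qed.

Lemma ext_hom_fg w : ext_hom f (ext_hom g w) = reduce w.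
Proof. by apply: ext_homK; case: fg_aut. Qed.

Lemma psi_pow0 w : psi 0 w = reduce w.
Proof. by []. Qed.

Lemma psi_pow_nil j : psi j [::] = [::].
Proof. by case: j => m; apply: iter_fix. Qed.

Lemma psi_pow_reduced j w : reduce (psi j w) = psi j w.
Proof. by case: j => [[|m]|m]; rewrite /= ?reduceK ?ext_hom_reduced. Qed.

Lemma psi_pow_reduce j w : psi j (reduce w) = psi j w.
Proof. by case: j => m; rewrite /= reduceK. Qed.

Lemma psi_pow_succ j w : psi (j + 1) w = ext_hom f (psi j w).
Proof.
case: j => [m|[|m]].
- by have -> : (Posz m + 1 = Posz m.+1)%R by lia.
- have -> : (Negz 0 + 1 = Posz 0)%R by lia.
  by rewrite /= ext_hom_fg reduceK.
- have -> : (Negz m.+1 + 1 = Negz m)%R by lia.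
  by rewrite /= ext_hom_fg ext_hom_reduced.
Qed.

Lemma psi_pow_pred j w : psi (j - 1) w = ext_hom g (psi j w).
Proof.
case: j => [[|m]|m].
- by have -> : (Posz 0 - 1 = Negz 0)%R by lia.
- have -> : (Posz m.+1 - 1 = Posz m)%R by lia.
  by rewrite /= ext_hom_gf; exact/esym/(psi_pow_reduced m).
- by have -> : (Negz m - 1 = Negz m.+1)%R by lia.
Qed.

Lemma psi_powD i j w : psi i (psi j w) = psi (i + j) w.
Proof.
elim/int_succ_pred_ind: i => [|i IHi|i IHi].
- by rewrite add0r psi_pow0 psi_pow_reduced.
- by rewrite psi_pow_succ IHi -psi_pow_succ addrAC.
- by rewrite psi_pow_pred IHi -psi_pow_pred addrAC.
Qed.

Lemma psi_pow_cat j u v : psi j (u ++ v) = reduce (psi j u ++ psi j v).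
Proof.
elim/int_succ_pred_ind: j => [|j IHj|j IHj].
- by rewrite !psi_pow0 reduce_catm.
- by rewrite !psi_pow_succ IHj ext_hom_reduce ext_hom_cat.
- by rewrite !psi_pow_pred IHj ext_hom_reduce ext_hom_cat.
Qed.

Lemma psi_pow_finv j w : psi j (finv w) = reduce (finv (psi j w)).
Proof.
elim/int_succ_pred_ind: j => [|j IHj|j IHj].
- by rewrite !psi_pow0 reduce_finv_reduce.
- by rewrite !psi_pow_succ IHj ext_hom_reduce ext_hom_finv.
- by rewrite !psi_pow_pred IHj ext_hom_reduce ext_hom_finv.
Qed.

Lemma psi_pow_flatten (S : Type) j (F : S -> seq (A * bool)) (s : seq S) :
  psi j (flatten (map F s)) = reduce (flatten [seq psi j (F y) | y <- s]).
Proof.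
elim: s => [|y s IHs] /=; first exact: psi_pow_nil.
by rewrite psi_pow_cat IHs reduce_catmr.
Qed.

Definition twisted_prod L := reduce (flatten [seq psi p.1 [:: p.2] | p <- L]).

Lemma twisted_prod_rcons L x :
  twisted_prod (rcons L (0%R, x)) = reduce (twisted_prod L ++ [:: x]).
Proof. by rewrite /twisted_prod map_rcons flatten_rcons reduce_catml. Qed.

Lemma psi_pow_twisted_prod e L :
  psi e (twisted_prod L) = twisted_prod [seq ((e + p.1)%R, p.2) | p <- L].
Proof.
rewrite /twisted_prod psi_pow_reduce psi_pow_flatten -map_comp.
by congr (reduce (flatten _)); apply: eq_map => p /=; rewrite psi_powD.
Qed.

Lemma size_psi_pow_letter (P : nat -> nat) j x :
  (forall a k, distA_le (psi k [:: (a, false)]) (P `|k|%N)) ->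
  size (psi j [:: x]) <= P `|j|%N.
Proof.
move=> distP; have size_gen a : size (psi j [:: (a, false)]) <= P `|j|%N.
  by have [w [w_le <-]] := distP a j; apply: leq_trans (size_reduce w) w_le.
case: x => a [|]; last exact: size_gen.
rewrite -[[:: (a, true)]]/(finv [:: (a, false)]) psi_pow_finv.
by apply: leq_trans (size_reduce _) _; rewrite size_finv.
Qed.

Lemma size_twisted_prod (P : nat -> nat) c L :
  {homo P : m n / m <= n} ->
  (forall a k, distA_le (psi k [:: (a, false)]) (P `|k|%N)) ->
  all (fun p => `|p.1|%N <= c) L -> size (twisted_prod L) <= size L * P c.
Proof.
move=> P_mono distP /allP exps_L.
apply: leq_trans (size_reduce _) (size_flatten_map_le _) => p /exps_L p_c.
exact: leq_trans (size_psi_pow_letter _ _ distP) (P_mono _ _ p_c).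
Qed.

Lemma eval_word_decomposition (ws : seq ((A + bool) * bool)) : exists c L,
  [/\ c + size L <= size ws, size (reduce (eval_word f g ws).1) <= c,
      all (fun p => `|p.1|%N <= c) L &
      reduce (eval_word f g ws).2 = twisted_prod L].
Proof.
elim/last_ind: ws => [|ws l [c [L [size_cL size_u exps_L gE]]]].
  by exists 0, [::].
rewrite /eval_word foldl_rcons -/(eval_word f g ws).
case: (eval_word f g ws) size_u gE => u y /= size_u gE.
case: l => [[a|st] b]; rewrite /gmul /gen_elt /= /fmul.
- exists c, (rcons L (0%R, (a, b))); split.
  + by rewrite !size_rcons; lia.
  + by rewrite cats0 reduceK.
  + by rewrite all_rcons exps_L andbT.
  + by rewrite twisted_prod_rcons -gE reduceK /exp_sum big_nil oppr0.
- have abs_e : `|(- exp_sum [:: (st, b)])%R|%N = 1.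
    by rewrite /exp_sum big_seq1; case: b.
  move: (- exp_sum _)%R abs_e => e abs_e.
  exists c.+1, [seq ((e + p.1)%R, p.2) | p <- L]; split.
  + by rewrite size_rcons size_map addSn ltnS.
  + rewrite reduceK -reduce_catml; apply: leq_trans (size_reduce _) _.
    by rewrite size_cat /=; lia.
  + apply/allP => _ /mapP[p L_p ->] /=; move/allP/(_ p L_p): exps_L; lia.
  + rewrite cats0 reduceK psi_pow_reduced -psi_pow_reduce gE.
    exact: psi_pow_twisted_prod.
Qed.

End Twisting.

Theorem proposition3p14 (A : finType) (f g : A -> seq (A * bool)) (P : nat -> nat) :
  is_aut_pair f g ->
  {homo P : m n / m <= n} ->
  (forall (a : A) (k : int), distA_le (psi_pow f g k [:: (a, false)]) (P `|k|%N)) ->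
  forall (n : nat) (gam : Gamma A), distG_le f g gam n ->
    comb_len gam <= n * P n + n.
Proof.
move=> fg_aut P_mono distP n _ [w [size_w <-]].
have [c [L [size_cL size_u exps_L gE]]] := eval_word_decomposition fg_aut w.
have size_g := size_twisted_prod fg_aut P_mono distP exps_L.
have P_c : P c <= P n by apply: P_mono; lia.
have : size L * P c <= n * P n by apply: leq_mul => //; lia.
rewrite /comb_len gE; lia.
Qed.
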